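(* Let $E$ be an evident branch, $\alpha$ a sort, and $a,b$ two different $\alpha$-discriminants. Then (1) there exist terms $s\in a$ and $t\in b$ such that $s\neq t\in E$ or $t\neq s\in E$; and (2) there exist no terms $s\in a$ and $t\in b$ such that $(s=t)\in E$.
   Context: Types: a countable set of base types including a distinguished $o$; other base types are sorts. Types: base types and $\sigma\tau$. Countably many names with unique types, infinitely many per type. Terms: names; $st:\mu$ for $s:\tau\mu,t:\tau$; $\lambda x.t:\sigma\tau$ for a name $x:\sigma$, $t:\tau$. $\mathrm{Wff}_\sigma$: terms of type $\sigma$. Logical constants: $\neg:oo$, $=_\sigma:\sigma\sigma o$; other names are variables. Formulas: terms of type $o$; $s=_\sigma t$ is $(=_\sigma s)t$; $s\neq_\sigma t$ is $\neg(s=_\sigma t)$. A fixed type-preserving total normalization operator $[\cdot]$ on terms, with $s$ normal iff $[s]=s$, satisfies $[[s]]=[s]$, $[[s]t]=[st]$, and $[xs_1\dots s_n]=x[s_1]\dots[s_n]$ for any name $x$, $n\ge0$, with $xs_1\dots s_n$ of base type. A branch is a set of normal formulas. $E$ is evident if ($x$ ranges over variables): (DN) $\neg\neg s\in E\Rightarrow s\in E$; (BQ) $s=_ot\in E\Rightarrow$ ($s,t\in E$ or $\neg s,\neg t\in E$); (BE) $s\neq_ot\in E\Rightarrow$ ($s,\neg t\in E$ or $\neg s,t\in E$); (FQ) $s=_{\sigma\tau}t\in E\Rightarrow[su]=[tu]\in E$ for all normal $u:\sigma$; (FE) $s\neq_{\sigma\tau}t\in E\Rightarrow[sx]\neq[tx]\in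 E$ for some variable $x$; (Mat) $xs_1\dots s_n,\neg xt_1\dots t_n\in E\Rightarrow n\ge1$ and $s_i\neq t_i\in E$ for some $i$; (Dec) $xs_1\dots s_n\neq_\alpha xt_1\dots t_n\in E\Rightarrow n\ge 1$ and $s_i\neq t_i\in E$ for some $i$; (Con) $s=_\alpha t,u\neq_\alpha v\in E\Rightarrow$ ($s\neq u,t\neq u\in E$) or ($s\neq v,t\neq v\in E$). A term $u\in\mathrm{Wff}_\alpha$ is $\alpha$-discriminating in $E$ if there is a term $t$ with $u\neq_\alpha t\in E$ or $t\neq_\alpha u\in E$. An $\alpha$-discriminant is a maximal (w.r.t. inclusion) set $a$ of $\alpha$-discriminating terms such that there is no disequation $s\neq t\in E$ with $s,t\in a$. *)

From Stdlib Require Import List Arith.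
Import ListNotations.

(* Types: base types indexed by nat (Base 0 = o, all others are sorts), and arrows. *)
Inductive ty : Type :=
| Base : nat -> ty
| Arr : ty -> ty -> ty.

Definition o : ty := Base 0.
Definition is_sort (a : ty) : Prop := exists b, a = Base b /\ b <> 0.

Inductive name : Type :=
| NVar : ty -> nat -> name
| NNeg : name
| NEq : ty -> name.

Definition nty (x : name) : ty :=
  match x with
  | NVar T _ => T
  | NNeg => Arr o o
  | NEq T => Arr T (Arr T o)
  end.

Definition is_var (x : name) : Prop := exists T n, x = NVar T n.

Inductive tm : Type :=
| Nm : name -> tm
| App : tm -> tm -> tm
| Lam : name -> tm -> tm.

Inductive hasty : tm -> ty -> Prop :=
| ty_Nm x : hasty (Nm x) (nty x)
| ty_App s t T U : hasty s (Arr T U) -> hasty t T -> hasty (App s t) U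
| ty_Lam x t U : hasty t U -> hasty (Lam x t) (Arr (nty x) U).

Definition Wff (T : ty) (s : tm) : Prop := hasty s T.

Definition apps (h : tm) (l : list tm) : tm := fold_left App l h.

Definition eqf (T : ty) (s t : tm) : tm := App (App (Nm (NEq T)) s) t.
Definition negf (s : tm) : tm := App (Nm NNeg) s.
Definition neqf (T : ty) (s t : tm) : tm := negf (eqf T s t).

Record NormOp : Type := {
  nf : tm -> tm;
  nf_type : forall s T, hasty s T -> hasty (nf s) T;
  nf_idem : forall s T, hasty s T -> nf (nf s) = nf s;
  nf_app : forall s t T, hasty (App s t) T -> nf (App (nf s) t) = nf (App s t);
  nf_head : forall x ss b, hasty (apps (Nm x) ss) (Base b) ->
      nf (apps (Nm x) ss) = apps (Nm x) (map nf ss)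
}.

Definition normal (N : NormOp) (s : tm) : Prop := nf N s = s.

Definition branch (N : NormOp) (E : tm -> Prop) : Prop :=
  forall s, E s -> hasty s o /\ normal N s.

Definition evident (N : NormOp) (E : tm -> Prop) : Prop :=
  (forall s, E (negf (negf s)) -> E s) /\
  (forall s t, E (eqf o s t) -> (E s /\ E t) \/ (E (negf s) /\ E (negf t))) /\
  (forall s t, E (neqf o s t) -> (E s /\ E (negf t)) \/ (E (negf s) /\ E t)) /\
  (forall S T s t, E (eqf (Arr S T) s t) ->
     forall u, hasty u S -> normal N u ->
       E (eqf T (nf N (App s u)) (nf N (App t u)))) /\
  (forall S T s t, E (neqf (Arr S T) s t) ->
     exists n, E (neqf T (nf N (App s (Nm (NVar S n)))) (nf N (App t (Nm (NVar S n)))))) /\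
  (forall x ss ts, is_var x -> E (apps (Nm x) ss) -> E (negf (apps (Nm x) ts)) ->
     1 <= length ss /\
     exists i S, i < length ss /\ i < length ts /\
       E (neqf S (nth i ss (Nm NNeg)) (nth i ts (Nm NNeg)))) /\
  (forall a x ss ts, is_sort a -> is_var x ->
     E (neqf a (apps (Nm x) ss) (apps (Nm x) ts)) ->
     1 <= length ss /\
     exists i S, i < length ss /\ i < length ts /\
       E (neqf S (nth i ss (Nm NNeg)) (nth i ts (Nm NNeg)))) /\
  (forall a s t u v, is_sort a -> E (eqf a s t) -> E (neqf a u v) ->
     (E (neqf a s u) /\ E (neqf a t u)) \/ (E (neqf a s v) /\ E (neqf a t v))).

Definition discriminating (E : tm -> Prop) (a : ty) (u : tm) : Prop :=
  Wff a u /\ exists t, E (neqf a u t) \/ E (neqf a t u).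

Definition pre_discriminant (E : tm -> Prop) (a : ty) (A : tm -> Prop) : Prop :=
  (forall u, A u -> discriminating E a u) /\
  ~ (exists s t, A s /\ A t /\ E (neqf a s t)).

Definition discriminant (E : tm -> Prop) (a : ty) (A : tm -> Prop) : Prop :=
  pre_discriminant E a A /\
  forall B, pre_discriminant E a B -> (forall u, A u -> B u) -> forall u, B u -> A u.

(* Two different discriminants are both maximal, so their union cannot be a
   pre-discriminant: some disequation of E must join a term of one to a term of
   the other, which is (1).  For (2), an equation s = t with s in a and t in b
   would, by (Con), turn any disequation u <> v between members of a and b into
   a disequation from s or t to a member of its own discriminant. *)
From Stdlib Require Import Classical.

Section Discriminants.

Variables (E : tm -> Prop) (al : ty).

Lemma pre_discriminant_no_neq (A : tm -> Prop) s t :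
  pre_discriminant E al A -> A s -> A t -> ~ E (neqf al s t).
Proof. intros [_ HA] Hs Ht Hst; apply HA; exists s, t; auto. Qed.

Lemma pre_discriminant_union (A B : tm -> Prop) :
  pre_discriminant E al A -> pre_discriminant E al B ->
  (forall s t, A s -> B t -> ~ E (neqf al s t) /\ ~ E (neqf al t s)) ->
  pre_discriminant E al (fun u => A u \/ B u).
Proof.
  intros HA HB Hcross; split.
  - intros u [Hu | Hu]; [apply HA | apply HB]; exact Hu.
  - intros (s & t & [Hs | Hs] & [Ht | Ht] & Hst).
    + exact (pre_discriminant_no_neq A s t HA Hs Ht Hst).
    + exact (proj1 (Hcross s t Hs Ht) Hst).
    + exact (proj2 (Hcross t s Ht Hs) Hst).
    + exact (pre_discriminant_no_neq B s t HB Hs Ht Hst).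
Qed.

Lemma discriminant_eq_of_no_cross_neq (A B : tm -> Prop) :
  discriminant E al A -> discriminant E al B ->
  (forall s t, A s -> B t -> ~ E (neqf al s t) /\ ~ E (neqf al t s)) ->
  forall u, A u <-> B u.
Proof.
  intros [HA maxA] [HB maxB] Hcross.
  pose proof (pre_discriminant_union A B HA HB Hcross) as HAB.
  intro u; split; intro Hu.
  - apply (maxB _ HAB); auto.
  - apply (maxA _ HAB); auto.
Qed.

Lemma discriminants_cross_neq (A B : tm -> Prop) :
  discriminant E al A -> discriminant E al B -> ~ (forall u, A u <-> B u) ->
  exists s t, A s /\ B t /\ (E (neqf al s t) \/ E (neqf al t s)).
Proof.
  intros HA HB Hne; apply NNPP; intro Hnone.
  apply Hne, (discriminant_eq_of_no_cross_neq A B HA HB).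
  intros s t Hs Ht; split; intro Hst; apply Hnone; exists s, t; auto.
Qed.

Hypothesis con : forall s t u v, E (eqf al s t) -> E (neqf al u v) ->
  (E (neqf al s u) /\ E (neqf al t u)) \/ (E (neqf al s v) /\ E (neqf al t v)).

Lemma eq_across_no_neq (A B : tm -> Prop) s t u v :
  pre_discriminant E al A -> pre_discriminant E al B ->
  A s -> B t -> E (eqf al s t) ->
  (A u \/ B u) -> (A v \/ B v) -> ~ E (neqf al u v).
Proof.
  intros HA HB Hs Ht Hst Hu Hv Huv.
  assert (Hend : forall w, A w \/ B w -> ~ (E (neqf al s w) /\ E (neqf al t w))).
  { intros w [Hw | Hw] [Hsw Htw].
    - exact (pre_discriminant_no_neq A s w HA Hs Hw Hsw).
    - exact (pre_discriminant_no_neq B t w HB Ht Hw Htw). }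
  destruct (con s t u v Hst Huv) as [Hsu | Hsv].
  - exact (Hend u Hu Hsu).
  - exact (Hend v Hv Hsv).
Qed.

Lemma discriminants_no_cross_eq (A B : tm -> Prop) :
  discriminant E al A -> discriminant E al B -> ~ (forall u, A u <-> B u) ->
  ~ (exists s t, A s /\ B t /\ E (eqf al s t)).
Proof.
  intros HA HB Hne (s & t & Hs & Ht & Hst).
  apply Hne, (discriminant_eq_of_no_cross_neq A B HA HB).
  intros u v Hu Hv; split.
  - exact (eq_across_no_neq A B s t u v (proj1 HA) (proj1 HB) Hs Ht Hst
             (or_introl Hu) (or_intror Hv)).
  - exact (eq_across_no_neq A B s t v u (proj1 HA) (proj1 HB) Hs Ht Hst
             (or_intror Hv) (or_introl Hu)).
Qed.

End Discriminants.

Lemma evident_con (N : NormOp) (E : tm -> Prop) (al : ty) :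
  evident N E -> is_sort al ->
  forall s t u v, E (eqf al s t) -> E (neqf al u v) ->
  (E (neqf al s u) /\ E (neqf al t u)) \/ (E (neqf al s v) /\ E (neqf al t v)).
Proof.
  intros (_ & _ & _ & _ & _ & _ & _ & Con) Hal s t u v.
  exact (Con al s t u v Hal).
Qed.

Theorem proposition6p4 (N : NormOp) (E : tm -> Prop) (al : ty)
  (A B : tm -> Prop) :
  branch N E -> evident N E -> is_sort al ->
  discriminant E al A -> discriminant E al B ->
  ~ (forall u, A u <-> B u) ->
  (exists s t, A s /\ B t /\ (E (neqf al s t) \/ E (neqf al t s))) /\
  ~ (exists s t, A s /\ B t /\ E (eqf al s t)).
Proof.
  intros _ Hev Hal HA HB Hne; split.
  - exact (discriminants_cross_neq E al A B HA HB Hne).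
  - exact (discriminants_no_cross_eq E al (evident_con N E al Hev Hal) A B HA HB Hne).
Qed.
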